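(* Let $(a_k)_{k\ge1},(c_k)_{k\ge1}$ be real sequences with $\sum_{k\ge1}(a_k^2+c_k^2)<\infty$. Then $$\begin{aligned}F(a,c):=\sum_{k\ge1}\Big\{&a_k^2\Big(0.84+\frac1{k^2}-\frac1{(k-1)^2}\Big)+c_k^2\Big(0.84+\frac1{k(k+1)}\Big)+\frac{2a_ka_{k+1}}{(k+1)^2}+2a_k\sum_{j>k+1}a_j\Big(\frac1{j^2}-\frac1{(j-1)^2}\Big)\\&+2a_kc_k\frac{1+2k-k^2}{2k^2(k+1)}+2a_{k+1}c_k\frac{k^2-k-1}{2k^2(k+1)^2}-2a_{k+2}c_k\frac{k+2}{2(k+1)^2}+\sum_{j>k}\frac{2a_kc_j}{j(j+1)}\Big\}\ge0.\end{aligned}$$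
   Context: For $k=1$ the term $\frac{1}{(k-1)^2}$ is interpreted as $0$. *)

From Stdlib Require Import Reals.
From Coquelicot Require Import Coquelicot.
Open Scope R_scope.

(* 1/(k-1)^2, interpreted as 0 for k = 1 (and k = 0). *)
Definition inv_sq_pred (k : nat) : R :=
  match k with
  | O | S O => 0
  | S m => 1 / (INR m) ^ 2
  end.

(* The k-th summand of F(a,c), for k >= 1. Sequences are indexed from 1;
   the values a 0, c 0 are never used. *)
Definition F_term (a c : nat -> R) (k : nat) : R :=
  let K := INR k in
  a k ^ 2 * (84 / 100 + 1 / K ^ 2 - inv_sq_pred k)
  + c k ^ 2 * (84 / 100 + 1 / (K * (K + 1)))
  + 2 * a k * a (S k) / (K + 1) ^ 2
  + 2 * a k * Series (fun i => let j := (k + 2 + i)%nat in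
                        a j * (1 / (INR j) ^ 2 - 1 / (INR j - 1) ^ 2))
  + 2 * a k * c k * ((1 + 2 * K - K ^ 2) / (2 * K ^ 2 * (K + 1)))
  + 2 * a (S k) * c k * ((K ^ 2 - K - 1) / (2 * K ^ 2 * (K + 1) ^ 2))
  - 2 * a (S (S k)) * c k * ((K + 2) / (2 * (K + 1) ^ 2))
  + Series (fun i => let j := (k + 1 + i)%nat in
              2 * a k * c j / (INR j * (INR j + 1))).

From Stdlib Require Import Reals Lra Lia Psatz.
From Coquelicot Require Import Coquelicot.
Open Scope R_scope.

(* Summation by parts.  Put d_j = 1/j^2 - 1/(j-1)^2, w_j = 1/(j(j+1)), s = a_1 + ... + a_(k-1)
   and T_k = sum_(j >= k) (a_j d_j + c_j w_j).  Since T_k - T_(k+1) = a_k d_k + c_k w_k, the k-th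
   summand equals q_k(s, a_k, a_(k+1), a_(k+2), c_k) + 2 (s + a_k) T_(k+1) - 2 s T_k for an explicit
   quadratic form q_k, so the N-th partial sum is sum_(k <= N) q_k + 2 (a_1 + ... + a_N) T_(N+1).
   A quadratic potential phi_k with q_k + phi_k(s, a_k, a_(k+1)) >= phi_(k+1)(s + a_k, a_(k+1), a_(k+2))
   and phi_1 = 0 (exact LDL^T certificates for k <= 11, 2x2 block estimates for k >= 12) bounds
   sum_(k <= N) q_k below by phi_(N+1).  For large N, phi_(N+1) is s^2/(20(N+1)) minus small
   multiples of a_(N+1)^2 and a_(N+2)^2, and completing the square against 2 s T_(N+1) leaves an
   error O(a_(N+1)^2 + a_(N+2)^2 + N T_(N+1)^2), which tends to 0 because T_(N+1) = O(1/N). *)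

Lemma quad2_nonneg (A B C u v : R) :
  0 <= A -> 0 <= C -> B ^ 2 <= A * C -> 0 <= A * u ^ 2 + 2 * B * u * v + C * v ^ 2.
Proof.
  intros HA HC HB.
  destruct (Req_dec A 0) as [A0 | A0].
  - subst A. assert (B = 0) by nra. subst B. nra.
  - apply (Rmult_le_reg_l A); [lra |].
    replace (A * (A * u ^ 2 + 2 * B * u * v + C * v ^ 2))
      with ((A * u + B * v) ^ 2 + (A * C - B ^ 2) * v ^ 2) by ring.
    pose proof (pow2_ge_0 (A * u + B * v)).
    pose proof (Rmult_le_pos (A * C - B ^ 2) (v ^ 2) ltac:(lra) (pow2_ge_0 v)).
    lra.
Qed.

Lemma sq_div_le (N D r : R) : 0 < D -> N ^ 2 <= r * D ^ 2 -> (N / D) ^ 2 <= r.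
Proof.
  intros HD H. replace ((N / D) ^ 2) with (N ^ 2 / D ^ 2) by (field; lra).
  apply Rle_div_l; [apply pow_lt |]; lra.
Qed.

Lemma two_mul_le_sq_add (x y z : R) : -1 <= z <= 1 ->
  - (x ^ 2 + y ^ 2) <= 2 * x * y * z <= x ^ 2 + y ^ 2.
Proof.
  intros Hz. pose proof (pow2_ge_0 (x - y)). pose proof (pow2_ge_0 (x + y)).
  destruct (Rle_dec 0 (x * y)); split; nra.
Qed.

Lemma div_between_neg1_1 (N D : R) : 0 < D -> - D <= N <= D -> -1 <= N / D <= 1.
Proof.
  intros HD HN. split.
  - apply Rle_div_r; lra.
  - apply Rle_div_l; lra.
Qed.

Lemma is_series_telescope (g : nat -> R) (l : R) :
  is_lim_seq g l -> is_series (fun n => g n - g (S n)) (g 0%nat - l).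
Proof.
  intros Hg.
  enough (H : is_lim_seq (sum_n (fun n => g n - g (S n))) (g 0%nat - l)) by exact H.
  apply (is_lim_seq_ext (fun n => g 0%nat - g (S n))).
  - intros n. induction n as [|n IH].
    + rewrite sum_O. reflexivity.
    + rewrite sum_Sn, <- IH. unfold plus; simpl. ring.
  - apply is_lim_seq_minus'; [apply is_lim_seq_const |].
    exact (proj1 (is_lim_seq_incr_1 g l) Hg).
Qed.

Lemma sum_n_ge_term (f : nat -> R) (n m : nat) :
  (forall k, 0 <= f k) -> (n <= m)%nat -> f n <= sum_n f m.
Proof.
  intros f_ge0. revert n. induction m as [|m IH]; intros n Hnm.
  - replace n with 0%nat by lia. rewrite sum_O. lra.
  - rewrite sum_Sn. unfold plus; simpl.
    destruct (Nat.eq_dec n (S m)) as [-> | Hn].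
    + pose proof (IH 0%nat ltac:(lia)). pose proof (f_ge0 0%nat). lra.
    + pose proof (IH n ltac:(lia)). pose proof (f_ge0 (S m)). lra.
Qed.

Lemma Series_ge_term (f : nat -> R) (n : nat) :
  (forall k, 0 <= f k) -> ex_series f -> f n <= Series f.
Proof.
  intros f_ge0 Hf.
  apply (is_lim_seq_le_loc (fun _ => f n) (sum_n f) (f n) (Series f)).
  - exists n. intros m Hm. exact (sum_n_ge_term f n m f_ge0 Hm).
  - apply is_lim_seq_const.
  - exact (Series_correct f Hf).
Qed.

Lemma weighted_series_bound (u w : nat -> R) (M W : R) :
  (forall i, Rabs (u i) <= M) -> is_series (fun i => Rabs (w i)) W ->
  ex_series (fun i => u i * w i) /\ Rabs (Series (fun i => u i * w i)) <= M * W.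
Proof.
  intros Hu Hw.
  assert (Hdom : forall i, 0 <= Rabs (u i * w i) <= M * Rabs (w i)).
  { intros i. split; [apply Rabs_pos |].
    rewrite Rabs_mult. apply Rmult_le_compat_r; [apply Rabs_pos | apply Hu]. }
  assert (HMw : is_series (fun i => M * Rabs (w i)) (M * W)) by exact (is_series_scal_l M _ W Hw).
  assert (Habs : ex_series (fun i => Rabs (u i * w i))).
  { apply (@ex_series_le R_AbsRing R_CompleteNormedModule _ (fun i => M * Rabs (w i)));
      [| exists (M * W); exact HMw].
    intros i. rewrite Rabs_Rabsolu. apply Hdom. }
  split; [exact (ex_series_Rabs _ Habs) |].
  eapply Rle_trans; [exact (Series_Rabs _ Habs) |].
  rewrite <- (is_series_unique _ _ HMw).
  apply Series_le; [exact Hdom | exists (M * W); exact HMw].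
Qed.

Lemma Series_shift_1 (f : nat -> R) (m : nat) :
  ex_series (fun i => f (S m + i)%nat) ->
  Series (fun i => f (m + i)%nat) = f m + Series (fun i => f (S m + i)%nat).
Proof.
  intros Hf.
  assert (Hsucc : forall i, f (m + S i)%nat = f (S m + i)%nat)
    by (intros i; rewrite Nat.add_succ_r; reflexivity).
  rewrite Series_incr_1, Nat.add_0_r.
  - f_equal. apply Series_ext. exact Hsucc.
  - apply ex_series_incr_1. exact (ex_series_ext _ _ (fun i => eq_sym (Hsucc i)) Hf).
Qed.

Lemma is_lim_seq_inv_INR_add (p : nat) : is_lim_seq (fun n => / INR (p + n)) 0.
Proof.
  replace (Finite 0) with (Rbar_inv p_infty) by reflexivity.
  apply is_lim_seq_inv; [| discriminate].
  apply (is_lim_seq_ext (fun n => INR (n + p))); [intros n; f_equal; lia |].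
  exact (proj1 (is_lim_seq_incr_n INR p p_infty) is_lim_seq_INR).
Qed.

Definition inv_sq_diff (k : nat) : R := 1 / INR k ^ 2 - inv_sq_pred k.
Definition inv_pronic (k : nat) : R := 1 / (INR k * (INR k + 1)).

Lemma inv_sq_diff_ge2 (j : nat) :
  (2 <= j)%nat -> inv_sq_diff j = / INR j ^ 2 - / INR (j - 1) ^ 2.
Proof.
  intros Hj. destruct j as [|[|m]]; try lia.
  unfold inv_sq_diff. cbn [inv_sq_pred].
  replace (S (S m) - 1)%nat with (S m) by lia. unfold Rdiv. ring.
Qed.

Lemma inv_sq_diff_S (k : nat) :
  (1 <= k)%nat -> inv_sq_diff (S k) = 1 / (INR k + 1) ^ 2 - 1 / INR k ^ 2.
Proof.
  intros Hk. destruct k as [|k]; [lia |].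
  unfold inv_sq_diff. cbn [inv_sq_pred]. rewrite (S_INR (S k)). reflexivity.
Qed.

Lemma is_series_inv_pronic (m : nat) :
  (1 <= m)%nat -> is_series (fun i => inv_pronic (m + i)) (/ INR m).
Proof.
  intros Hm.
  pose proof (is_series_telescope _ _ (is_lim_seq_inv_INR_add m)) as H. cbv beta in H.
  rewrite Nat.add_0_r, Rminus_0_r in H.
  eapply is_series_ext; [| exact H].
  intros i. cbv beta. rewrite Nat.add_succ_r, S_INR.
  assert (1 <= INR (m + i)) by (apply (le_INR 1); lia).
  unfold inv_pronic. simpl. field. lra.
Qed.

Lemma is_series_abs_inv_sq_diff (m : nat) :
  (2 <= m)%nat -> is_series (fun i => Rabs (inv_sq_diff (m + i))) (/ INR (m - 1) ^ 2).
Proof.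
  intros Hm.
  assert (Hlim : is_lim_seq (fun n => / INR (m - 1 + n) ^ 2) 0).
  { apply (is_lim_seq_ext (fun n => / INR (m - 1 + n) * / INR (m - 1 + n))).
    - intros n. rewrite <- Rinv_mult. f_equal. ring.
    - replace (Finite 0) with (Finite (0 * 0)) by (f_equal; ring).
      apply is_lim_seq_mult'; apply is_lim_seq_inv_INR_add. }
  pose proof (is_series_telescope _ _ Hlim) as H. cbv beta in H.
  rewrite Nat.add_0_r, Rminus_0_r in H.
  eapply is_series_ext; [| exact H].
  intros i. cbv beta. rewrite inv_sq_diff_ge2 by lia.
  replace (m + i - 1)%nat with (m - 1 + i)%nat by lia.
  replace (m - 1 + S i)%nat with (m + i)%nat by lia.
  assert (E : INR (m + i) = INR (m - 1 + i) + 1) by (rewrite <- S_INR; f_equal; lia).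
  assert (1 <= INR (m - 1 + i)) by (apply (le_INR 1); lia).
  rewrite E, Rabs_left1; [simpl; ring |].
  assert (/ (INR (m - 1 + i) + 1) ^ 2 <= / INR (m - 1 + i) ^ 2); [| lra].
  apply Rinv_le_contravar; [apply pow_lt; lra | apply pow_incr; lra].
Qed.

(** * The summand after summation by parts *)

Definition coef_a0c (k : nat) : R :=
  let K := INR k in (1 + 2 * K - K ^ 2) / (2 * K ^ 2 * (K + 1)).
Definition coef_a1c (k : nat) : R :=
  let K := INR k in (K ^ 2 - K - 1) / (2 * K ^ 2 * (K + 1) ^ 2).
Definition coef_a2c (k : nat) : R :=
  let K := INR k in (K + 2) / (2 * (K + 1) ^ 2).

(* With s = a_1 + ... + a_(k-1) and (a0, a1, a2, c) = (a_k, a_(k+1), a_(k+2), c_k), this is the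
   k-th summand minus the telescoping part 2 (s + a_k) T_(k+1) - 2 s T_k (see F_term_by_parts). *)
Definition local_form (k : nat) (s a0 a1 a2 c : R) : R :=
  a0 ^ 2 * (84 / 100 + inv_sq_diff k) + 2 * inv_sq_diff k * a0 * s
  + 2 * a0 * a1 / INR k ^ 2
  + c ^ 2 * (84 / 100 + inv_pronic k) + 2 * inv_pronic k * c * s
  + 2 * a0 * c * coef_a0c k + 2 * a1 * c * coef_a1c k - 2 * a2 * c * coef_a2c k.

Lemma local_coefs_bounded (k : nat) : (1 <= k)%nat ->
  -1 <= inv_sq_diff k <= 1 /\ 0 <= 1 / INR k ^ 2 <= 1 /\ 0 <= inv_pronic k <= 1 /\
  -1 <= coef_a0c k <= 1 /\ -1 <= coef_a1c k <= 1 /\ -1 <= coef_a2c k <= 1.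
Proof.
  intros Hk.
  assert (HK : 1 <= INR k) by (apply (le_INR 1); exact Hk).
  assert (Hinv : forall x, 1 <= x -> 0 <= 1 / x ^ 2 <= 1).
  { intros x Hx. split; [apply Rdiv_le_0_compat; nra | apply Rle_div_l; nra]. }
  unfold inv_sq_diff, inv_pronic, coef_a0c, coef_a1c, coef_a2c. set (K := INR k) in *.
  assert (HK2 := Hinv K HK).
  split.
  { destruct k as [|[|m]]; [lia | cbn [inv_sq_pred]; lra |].
    cbn [inv_sq_pred]. assert (1 <= INR (S m)) by (apply (le_INR 1); lia).
    pose proof (Hinv (INR (S m)) ltac:(lra)). lra. }
  assert (HKK : 2 <= K * (K + 1)) by nra.
  split; [exact HK2 |].
  split; [split; [apply Rdiv_le_0_compat | apply Rle_div_l]; lra |].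
  split; [apply div_between_neg1_1; nra |].
  split; apply div_between_neg1_1; nra.
Qed.

Lemma local_form_zero_bound (k : nat) (a0 a1 a2 c : R) : (1 <= k)%nat ->
  Rabs (local_form k 0 a0 a1 a2 c) <= 5 * (a0 ^ 2 + a1 ^ 2 + a2 ^ 2 + c ^ 2).
Proof.
  intros Hk.
  destruct (local_coefs_bounded k Hk) as (Hd & Hk2 & Hw & H0 & H1 & H2).
  pose proof (two_mul_le_sq_add a0 a1 (1 / INR k ^ 2) ltac:(lra)).
  pose proof (two_mul_le_sq_add a0 c (coef_a0c k) H0).
  pose proof (two_mul_le_sq_add a1 c (coef_a1c k) H1).
  pose proof (two_mul_le_sq_add a2 c (coef_a2c k) H2).
  pose proof (pow2_ge_0 a0). pose proof (pow2_ge_0 a1).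
  pose proof (pow2_ge_0 a2). pose proof (pow2_ge_0 c).
  assert (- a0 ^ 2 <= a0 ^ 2 * inv_sq_diff k <= a0 ^ 2) by (split; nra).
  assert (0 <= c ^ 2 * inv_pronic k <= c ^ 2) by (split; nra).
  unfold local_form. apply Rabs_le.
  replace (2 * a0 * a1 / INR k ^ 2) with (2 * a0 * a1 * (1 / INR k ^ 2)) by (unfold Rdiv; ring).
  split; lra.
Qed.

(** * The potential *)

Definition quad_form (p : R * R * R * R * R * R) (s a0 a1 : R) : R :=
  let '(p00, p01, p02, p11, p12, p22) := p in
  p00 * s ^ 2 + 2 * p01 * s * a0 + 2 * p02 * s * a1
  + p11 * a0 ^ 2 + 2 * p12 * a0 * a1 + p22 * a1 ^ 2.

(* Entries (p00, p01, p02, p11, p12, p22) of the Gram matrix of phi_k in (s, a0, a1), found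
   numerically; phi_0 = phi_1 = 0. *)
Definition potential_coefs (k : nat) : R * R * R * R * R * R :=
  match k with
  | 2 => (1653423/1000000, 523321/500000, 5597/40000, -1167/100000, -34981/1000000, -52477/500000)
  | 3 => (36141/1000000, 7157/31250, 3961/1000000, -110411/1000000, 2477/500000, -3109/62500)
  | 4 => (4787/250000, -14483/1000000, 16881/1000000, -40091/500000, 3947/500000, -27267/1000000)
  | 5 => (9331/1000000, 4221/200000, 699/125000, -15529/500000, 1337/500000, -8189/500000)
  | 6 => (3987/500000, 2779/500000, 453/125000, -9173/500000, 1603/1000000, -10933/1000000)
  | 7 => (7111/1000000, 761/200000, 2149/1000000, -11867/1000000, 987/1000000, -7777/1000000)
  | 8 => (6623/1000000, 559/250000, 1407/1000000, -519/62500, 131/200000, -5803/1000000)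
  | 9 => (1261/200000, 1471/1000000, 193/200000, -6123/1000000, 57/125000, -4491/1000000)
  | 10 => (1521/250000, 203/200000, 69/100000, -2349/500000, 329/1000000, -447/125000)
  | 11 => (5919/1000000, 731/1000000, 509/1000000, -1859/500000, 123/500000, -1457/500000)
  | _ => (0, 0, 0, 0, 0, 0)
  end.

Definition potential (k : nat) (s a0 a1 : R) : R :=
  if (k <=? 11)%nat then quad_form (potential_coefs k) s a0 a1
  else 1 / 20 / INR k * s ^ 2 - 62 / 10000 * a0 ^ 2 - 46 / 10000 * a1 ^ 2.

Definition potential_gap (k : nat) (s a0 a1 a2 c : R) : R :=
  local_form k s a0 a1 a2 c + potential k s a0 a1 - potential (S k) (s + a0) a1 a2.

Ltac expand_gap :=
  cbv [potential_gap local_form potential quad_form potential_coefs inv_sq_diff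
       inv_pronic coef_a0c coef_a1c coef_a2c inv_sq_pred Nat.leb];
  simpl INR.

(* Each gap is a quadratic form in (s, a0, a1, a2, c); the squares are the rows of an exact
   LDL^T factorisation of it, and lra finds the nonnegative diagonal weights.  At k = 1 the
   prefix sum s is 0. *)
Lemma potential_gap_1 a0 a1 a2 c : 0 <= potential_gap 1 0 a0 a1 a2 c.
Proof.
  expand_gap.
  pose proof (pow2_ge_0 (a0 - 46642/186577 * a1 - 139925/186577 * a2 + 500000/186577 * c)).
  pose proof (pow2_ge_0 (a1 + 268187/1877426 * a2 - 562500/938713 * c)).
  pose proof (pow2_ge_0 (a2 - 37375000/29770057 * c)).
  pose proof (pow2_ge_0 c).
  lra.
Qed.

Lemma potential_gap_2 s a0 a1 a2 c : 0 <= potential_gap 2 s a0 a1 a2 c.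
Proof.
  expand_gap.
  pose proof (pow2_ge_0 (s + 260501/1617282 * a0 - 89099/1617282 * a1 - 3961/1617282 * a2 + 250000/2425923 * c)).
  pose proof (pow2_ge_0 (a0 + 560344189/370739297 * a1 - 5374209541/370739297 * a2 + 71909750000/1112217891 * c)).
  pose proof (pow2_ge_0 (a1 - 11105480335/1831987456 * a2 + 27939378125/1030492944 * c)).
  pose proof (pow2_ge_0 (a2 - 15979504750000/3608480078961 * c)).
  pose proof (pow2_ge_0 c).
  lra.
Qed.

Lemma potential_gap_3 s a0 a1 a2 c : 0 <= potential_gap 3 s a0 a1 a2 c.
Proof.
  expand_gap.
  pose proof (pow2_ge_0 (s + 638884/152937 * a0 + 18444/16993 * a1 - 16881/16993 * a2 + 250000/50979 * c)).
  pose proof (pow2_ge_0 (a0 + 73638539757/378530421497 * a1 + 73829441763/378530421497 * a2 - 517397250000/378530421497 * c)).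
  pose proof (pow2_ge_0 (a1 - 2361094294289/4318620724589 * a2 + 130725784156250/38867586521301 * c)).
  pose proof (pow2_ge_0 (a2 - 1254351881218750/312169779156321 * c)).
  pose proof (pow2_ge_0 c).
  lra.
Qed.

Lemma potential_gap_4 s a0 a1 a2 c : 0 <= potential_gap 4 s a0 a1 a2 c.
Proof.
  expand_gap.
  pose proof (pow2_ge_0 (s - 651826/88353 * a0 - 4224/9817 * a1 - 5592/9817 * a2 + 50000/9817 * c)).
  pose proof (pow2_ge_0 (a0 + 14413661937/133238429423 * a1 - 3386520792/12112584493 * a2 + 258532706250/133238429423 * c)).
  pose proof (pow2_ge_0 (a1 - 812697893491/840934586276 * a2 + 1528006176250/210233646569 * c)).
  pose proof (pow2_ge_0 (a2 - 31783704625000/4987725731627 * c)).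
  pose proof (pow2_ge_0 c).
  lra.
Qed.

Lemma potential_gap_5 s a0 a1 a2 c : 0 <= potential_gap 5 s a0 a1 a2 c.
Proof.
  expand_gap.
  pose proof (pow2_ge_0 (s - 9369/1357 * a0 + 34/1357 * a1 - 3624/1357 * a2 + 100000/4071 * c)).
  pose proof (pow2_ge_0 (a0 + 50684958/968602915 * a1 - 38871024/968602915 * a2 + 149384000/581161749 * c)).
  pose proof (pow2_ge_0 (a1 - 12859422169/12264573248 * a2 + 130330560625/13797644904 * c)).
  pose proof (pow2_ge_0 (a2 - 15761258989000/2015353992681 * c)).
  pose proof (pow2_ge_0 c).
  lra.
Qed.

Lemma potential_gap_6 s a0 a1 a2 c : 0 <= potential_gap 6 s a0 a1 a2 c.
Proof.
  expand_gap.
  pose proof (pow2_ge_0 (s - 123977/7767 * a0 - 181/863 * a1 - 2149/863 * a2 + 500000/18123 * c)).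
  pose proof (pow2_ge_0 (a0 + 1585865061/40714332800 * a1 - 79626897/1272322900 * a2 + 818176875/1425001648 * c)).
  pose proof (pow2_ge_0 (a1 - 728731790752/503629698793 * a2 + 3373277397125000/222100697167713 * c)).
  pose proof (pow2_ge_0 (a2 - 126890125748125000/13159372102181613 * c)).
  pose proof (pow2_ge_0 c).
  lra.
Qed.

Lemma potential_gap_7 s a0 a1 a2 c : 0 <= potential_gap 7 s a0 a1 a2 c.
Proof.
  expand_gap.
  pose proof (pow2_ge_0 (s - 2246369/107604 * a0 - 87/488 * a1 - 1407/488 * a2 + 15625/427 * c)).
  pose proof (pow2_ge_0 (a0 + 822980308941/28541352691318 * a1 - 1460609644851/28541352691318 * a2 + 7816114687500/14270676345659 * c)).
  pose proof (pow2_ge_0 (a1 - 522596169435745/325720641337373 * a2 + 310104252192671875/15960311425531277 * c)).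
  pose proof (pow2_ge_0 (a2 - 12870341798879546875/1131564227266335317 * c)).
  pose proof (pow2_ge_0 c).
  lra.
Qed.

Lemma potential_gap_8 s a0 a1 a2 c : 0 <= potential_gap 8 s a0 a1 a2 c.
Proof.
  expand_gap.
  pose proof (pow2_ge_0 (s - 216878/7791 * a0 - 32/159 * a1 - 965/318 * a2 + 62500/1431 * c)).
  pose proof (pow2_ge_0 (a0 + 4973339623/219202293376 * a1 - 10623473665/219202293376 * a2 + 2376401234375/3945641280768 * c)).
  pose proof (pow2_ge_0 (a1 - 4131777519271/2531451562417 * a2 + 9012725597265625/410095153111554 * c)).
  pose proof (pow2_ge_0 (a2 - 109670164169609375/8347989296313783 * c)).
  pose proof (pow2_ge_0 c).
  lra.
Qed.

Lemma potential_gap_9 s a0 a1 a2 c : 0 <= potential_gap 9 s a0 a1 a2 c.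
Proof.
  expand_gap.
  pose proof (pow2_ge_0 (s - 639278/17901 * a0 - 50/221 * a1 - 690/221 * a2 + 100000/1989 * c)).
  pose proof (pow2_ge_0 (a0 + 14501384721/786852807524 * a1 - 18364867155/393426403762 * a2 + 18566325000/28101885983 * c)).
  pose proof (pow2_ge_0 (a1 - 14371829081686/8947885168407 * a2 + 18421662171920000/724778698640967 * c)).
  pose proof (pow2_ge_0 (a2 - 281683550255569375/19018461068398521 * c)).
  pose proof (pow2_ge_0 c).
  lra.
Qed.

Lemma potential_gap_10 s a0 a1 a2 c : 0 <= potential_gap 10 s a0 a1 a2 c.
Proof.
  expand_gap.
  pose proof (pow2_ge_0 (s - 53384/1215 * a0 - 41/165 * a1 - 509/165 * a2 + 20000/363 * c)).
  pose proof (pow2_ge_0 (a0 + 767298906/50044511929 * a1 - 2251062171/50044511929 * a2 + 393536475000/550489631219 * c)).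
  pose proof (pow2_ge_0 (a1 - 11989642369119/6755955550319 * a2 + 2198082982075000/74315511053509 * c)).
  pose proof (pow2_ge_0 (a2 - 337900070596620000/20533188782283661 * c)).
  pose proof (pow2_ge_0 c).
  lra.
Qed.

Lemma potential_gap_11 s a0 a1 a2 c : 0 <= potential_gap 11 s a0 a1 a2 c.
Proof.
  expand_gap.
  pose proof (pow2_ge_0 (s - 1877147/636097 * a0 + 1527/5257 * a1 + 250000/57827 * c)).
  pose proof (pow2_ge_0 (a0 + 770642669885/62737893473131 * a1 - 876678000000/62737893473131 * c)).
  pose proof (pow2_ge_0 (a1 + 36458174019274609375/103000278088703921904 * c)).
  pose proof (pow2_ge_0 (a2 - 8125/828 * c)).
  pose proof (pow2_ge_0 c).
  lra.
Qed.

(* The gap for k >= 12 in terms of b = inv_sq_diff k, w = inv_pronic k, iK2 = 1/k^2,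
   p = 1/(20(k+1)) (so that 1/(20k) = p + w/20) and the coefficients al, be, ga of a0 c, a1 c,
   a2 c.  It splits into PSD 2x2 blocks in (s,a0), (s,c), (a0,a1), (a0,c), (a1,c), (a2,c), the
   two blocks containing s sharing the s^2 coefficient w/20 equally. *)
Lemma gap_nonneg_of_block_bounds (b w iK2 al be ga p s a0 a1 a2 c : R) :
  0 <= w ->
  (b - p) ^ 2 <= w / 160 ->
  iK2 ^ 2 <= 1 / 20000 ->
  al ^ 2 <= 1 / 500 ->
  be ^ 2 <= 1 / 100000 ->
  ga ^ 2 <= 46 / 10000 * (38 / 100) ->
  0 <= 84 / 100 + b - 62 / 10000 - p - 45 / 100 ->
  0 <= 84 / 100 - 39 * w - 41 / 100 ->
  0 <= a0 ^ 2 * (84 / 100 + b) + 2 * b * a0 * s + 2 * a0 * a1 * iK2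
       + c ^ 2 * (84 / 100 + w) + 2 * w * c * s
       + 2 * a0 * c * al + 2 * a1 * c * be - 2 * a2 * c * ga
       + ((p + w / 20) * s ^ 2 - 62 / 10000 * a0 ^ 2 - 46 / 10000 * a1 ^ 2)
       - (p * (s + a0) ^ 2 - 62 / 10000 * a1 ^ 2 - 46 / 10000 * a2 ^ 2).
Proof.
  intros Hw Hbp HiK2 Hal Hbe Hga Ha0 Hc.
  pose proof (quad2_nonneg (w / 40) (b - p) (1 / 4) s a0 ltac:(lra) ltac:(lra) ltac:(lra)).
  pose proof (quad2_nonneg (w / 40) w (40 * w) s c ltac:(lra) ltac:(lra) ltac:(nra)).
  pose proof (quad2_nonneg (1 / 10) iK2 (1 / 2000) a0 a1 ltac:(lra) ltac:(lra) ltac:(lra)).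
  pose proof (quad2_nonneg (1 / 10) al (1 / 50) a0 c ltac:(lra) ltac:(lra) ltac:(lra)).
  pose proof (quad2_nonneg (1 / 1000) be (1 / 100) a1 c ltac:(lra) ltac:(lra) ltac:(lra)).
  pose proof (quad2_nonneg (46 / 10000) (- ga) (38 / 100) a2 c ltac:(lra) ltac:(lra) ltac:(nra)).
  pose proof (Rmult_le_pos _ (a0 ^ 2) Ha0 (pow2_ge_0 a0)).
  pose proof (Rmult_le_pos _ (c ^ 2) Hc (pow2_ge_0 c)).
  pose proof (pow2_ge_0 a1).
  lra.
Qed.

Lemma large_k_block_bounds (K : R) : 12 <= K ->
  let b := 1 / K ^ 2 - 1 / (K - 1) ^ 2 in
  let w := 1 / (K * (K + 1)) in
  let p := 1 / 20 / (K + 1) in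
  0 <= w /\
  (b - p) ^ 2 <= w / 160 /\
  (1 / K ^ 2) ^ 2 <= 1 / 20000 /\
  ((1 + 2 * K - K ^ 2) / (2 * K ^ 2 * (K + 1))) ^ 2 <= 1 / 500 /\
  ((K ^ 2 - K - 1) / (2 * K ^ 2 * (K + 1) ^ 2)) ^ 2 <= 1 / 100000 /\
  ((K + 2) / (2 * (K + 1) ^ 2)) ^ 2 <= 46 / 10000 * (38 / 100) /\
  0 <= 84 / 100 + b - 62 / 10000 - p - 45 / 100 /\
  0 <= 84 / 100 - 39 * w - 41 / 100.
Proof.
  intros HK b w p.
  set (t := K - 12).
  assert (Ht : 0 <= t) by (unfold t; lra).
  assert (EK : K = t + 12) by (unfold t; ring).
  assert (0 <= t ^ 2) by nra. assert (0 <= t ^ 3) by nra. assert (0 <= t ^ 4) by nra.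
  assert (0 <= t ^ 5) by nra. assert (0 <= t ^ 6) by nra.
  assert (Hw : 0 < w <= 1 / 156).
  { unfold w. split; [apply Rdiv_lt_0_compat; nra |].
    apply Rle_div_l; [nra |]. rewrite EK. nra. }
  assert (Hp : 0 <= p <= 1 / 260).
  { unfold p. split; [apply Rdiv_le_0_compat; lra |]. apply Rle_div_l; lra. }
  assert (Hb : - (1 / 100) <= b).
  { unfold b. replace (1 / K ^ 2 - 1 / (K - 1) ^ 2)
      with (- ((2 * K - 1) / (K ^ 2 * (K - 1) ^ 2))) by (field; lra).
    apply Ropp_le_contravar, Rle_div_l; [apply Rmult_lt_0_compat; apply pow_lt; lra |].
    rewrite EK. nra. }
  repeat split; try lra.
  - replace (b - p) with ((20 * (K + 1) * (1 - 2 * K) - K ^ 2 * (K - 1) ^ 2)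
                          / (20 * K ^ 2 * (K - 1) ^ 2 * (K + 1)))
      by (unfold b, p; field; lra).
    apply sq_div_le; [apply Rmult_lt_0_compat; [apply Rmult_lt_0_compat |]; try apply pow_lt; nra |].
    unfold w.
    replace (1 / (K * (K + 1)) / 160 * (20 * K ^ 2 * (K - 1) ^ 2 * (K + 1)) ^ 2)
      with (5 / 2 * K ^ 3 * (K - 1) ^ 4 * (K + 1)) by (field; lra).
    rewrite EK. nra.
  - apply sq_div_le; [apply pow_lt; lra |]. rewrite EK. nra.
  - apply sq_div_le; [nra |]. rewrite EK. nra.
  - apply sq_div_le; [nra |]. rewrite EK. nra.
  - apply sq_div_le; [nra |]. rewrite EK. nra.
Qed.

Lemma potential_gap_large (k : nat) (s a0 a1 a2 c : R) :
  (12 <= k)%nat -> 0 <= potential_gap k s a0 a1 a2 c.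
Proof.
  intros Hk. destruct k as [|[|m]]; try lia.
  set (K := INR (S (S m))).
  assert (HK : 12 <= K) by (unfold K; replace 12 with (INR 12) by (simpl; lra); apply le_INR; lia).
  assert (EK1 : INR (S m) = K - 1) by (unfold K; rewrite (S_INR (S m)); ring).
  assert (EK2 : INR (S (S (S m))) = K + 1) by (unfold K; rewrite (S_INR (S (S m))); ring).
  unfold potential_gap, potential.
  replace (S (S m) <=? 11)%nat with false by (symmetry; apply Nat.leb_gt; lia).
  replace (S (S (S m)) <=? 11)%nat with false by (symmetry; apply Nat.leb_gt; lia).
  unfold local_form, inv_sq_diff, inv_pronic, coef_a0c, coef_a1c, coef_a2c.
  cbn [inv_sq_pred]. rewrite EK1, EK2. fold K.
  destruct (large_k_block_bounds K HK) as (H0 & H1 & H2 & H3 & H4 & H5 & H6 & H7).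
  eapply Rle_trans;
    [apply (gap_nonneg_of_block_bounds _ _ (1 / K ^ 2) _ _ _ _ s a0 a1 a2 c H0 H1 H2 H3 H4 H5 H6 H7) |].
  right. field. lra.
Qed.

Lemma potential_gap_nonneg (k : nat) (s a0 a1 a2 c : R) :
  (2 <= k)%nat -> 0 <= potential_gap k s a0 a1 a2 c.
Proof.
  intros Hk.
  destruct (Compare_dec.le_lt_dec 12 k) as [Hlarge | Hsmall].
  { exact (potential_gap_large k s a0 a1 a2 c Hlarge). }
  assert (Hk' : (k = 2 \/ k = 3 \/ k = 4 \/ k = 5 \/ k = 6 \/ k = 7 \/ k = 8 \/ k = 9
                 \/ k = 10 \/ k = 11)%nat) by lia.
  destruct Hk' as [-> | [-> | [-> | [-> | [-> | [-> | [-> | [-> | [-> | ->]]]]]]]]];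
    [ apply potential_gap_2 | apply potential_gap_3 | apply potential_gap_4
    | apply potential_gap_5 | apply potential_gap_6 | apply potential_gap_7
    | apply potential_gap_8 | apply potential_gap_9 | apply potential_gap_10
    | apply potential_gap_11 ].
Qed.

Definition tail_a (a : nat -> R) (m : nat) : R :=
  Series (fun i => a (m + i)%nat * inv_sq_diff (m + i)).
Definition tail_c (c : nat -> R) (m : nat) : R :=
  Series (fun i => c (m + i)%nat * inv_pronic (m + i)).
Definition tail (a c : nat -> R) (m : nat) : R := tail_a a m + tail_c c m.

Fixpoint prefix_sum (a : nat -> R) (n : nat) : R :=
  match n with O => 0 | S m => prefix_sum a m + a (S m) end.

(* Indexed from 0 like sum_n: local_term a c n is the summand for k = n + 1. *)
Definition local_term (a c : nat -> R) (n : nat) : R :=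
  local_form (S n) (prefix_sum a n) (a (S n)) (a (S (S n))) (a (S (S (S n)))) (c (S n)).

Lemma potential_le_sum_local_term (a c : nat -> R) (N : nat) :
  potential (S (S N)) (prefix_sum a (S N)) (a (S (S N))) (a (S (S (S N))))
  <= sum_n (local_term a c) N.
Proof.
  induction N as [|N IH].
  - pose proof (potential_gap_1 (a 1%nat) (a 2%nat) (a 3%nat) (c 1%nat)) as Hgap.
    assert (Hpot1 : potential 1 0 (a 1%nat) (a 2%nat) = 0)
      by (cbv [potential quad_form potential_coefs Nat.leb]; ring).
    rewrite sum_O. unfold potential_gap in Hgap. unfold local_term. cbn [prefix_sum]. lra.
  - pose proof (potential_gap_nonneg (S (S N)) (prefix_sum a (S N)) (a (S (S N)))
                  (a (S (S (S N)))) (a (S (S (S (S N))))) (c (S (S N))) ltac:(lia)) as Hgap.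
    assert (Hsum : sum_n (local_term a c) (S N)
                   = sum_n (local_term a c) N + local_term a c (S N)) by exact (sum_Sn _ _).
    rewrite Hsum. unfold potential_gap in Hgap. unfold local_term at 2.
    change (prefix_sum a (S (S N))) with (prefix_sum a (S N) + a (S (S N))). lra.
Qed.

Definition truncation_error (a c : nat -> R) (N : nat) : R :=
  - (62 / 10000) * a (S (S N)) ^ 2 - 46 / 10000 * a (S (S (S N))) ^ 2
  - 20 * (INR (S (S N)) * tail a c (S (S N)) ^ 2).

Section BoundedSequences.

Variables (a c : nat -> R) (M : R).
Hypothesis a_bounded : forall j, (1 <= j)%nat -> Rabs (a j) <= M.
Hypothesis c_bounded : forall j, (1 <= j)%nat -> Rabs (c j) <= M.

Lemma tail_a_summable_bounded (m : nat) : (2 <= m)%nat ->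
  ex_series (fun i => a (m + i)%nat * inv_sq_diff (m + i)) /\
  Rabs (tail_a a m) <= M / INR (m - 1) ^ 2.
Proof.
  intros Hm. apply weighted_series_bound.
  - intros i. apply a_bounded. lia.
  - exact (is_series_abs_inv_sq_diff m Hm).
Qed.

Lemma tail_c_summable_bounded (m : nat) : (1 <= m)%nat ->
  ex_series (fun i => c (m + i)%nat * inv_pronic (m + i)) /\ Rabs (tail_c c m) <= M / INR m.
Proof.
  intros Hm. apply weighted_series_bound.
  - intros i. apply c_bounded. lia.
  - eapply is_series_ext; [| exact (is_series_inv_pronic m Hm)].
    intros i. simpl. symmetry. apply Rabs_right.
    assert (1 <= INR (m + i)) by (apply (le_INR 1); lia).
    unfold inv_pronic. apply Rle_ge, Rdiv_le_0_compat; nra.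
Qed.

Lemma tail_S (m : nat) : (1 <= m)%nat ->
  tail a c m = a m * inv_sq_diff m + c m * inv_pronic m + tail a c (S m).
Proof.
  intros Hm. unfold tail, tail_a, tail_c.
  rewrite (Series_shift_1 (fun j => a j * inv_sq_diff j)),
          (Series_shift_1 (fun j => c j * inv_pronic j)).
  - ring.
  - apply tail_c_summable_bounded. lia.
  - apply tail_a_summable_bounded. lia.
Qed.

Lemma tail_bound (m : nat) : (2 <= m)%nat -> Rabs (tail a c m) <= 2 * M / INR (m - 1).
Proof.
  intros Hm.
  destruct (tail_a_summable_bounded m Hm) as [_ Ha]. destruct (tail_c_summable_bounded m ltac:(lia)) as [_ Hc].
  assert (HM : 0 <= M) by exact (Rle_trans _ _ _ (Rabs_pos (a 1%nat)) (a_bounded 1 (le_n 1))).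
  assert (Hm1 : 1 <= INR (m - 1)) by (apply (le_INR 1); lia).
  assert (Em : INR m = INR (m - 1) + 1) by (rewrite <- S_INR; f_equal; lia).
  assert (M / INR (m - 1) ^ 2 <= M / INR (m - 1)).
  { apply Rmult_le_compat_l; [exact HM |]. apply Rinv_le_contravar; nra. }
  assert (M / INR m <= M / INR (m - 1)).
  { apply Rmult_le_compat_l; [exact HM |]. apply Rinv_le_contravar; lra. }
  unfold tail. eapply Rle_trans; [apply Rabs_triang |]. unfold Rdiv in *. lra.
Qed.

Lemma F_term_by_parts (k : nat) (s : R) : (1 <= k)%nat ->
  F_term a c k = local_form k s (a k) (a (S k)) (a (S (S k))) (c k)
                 + 2 * (s + a k) * tail a c (S k) - 2 * s * tail a c k.
Proof.
  intros Hk.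
  assert (Ea : Series (fun i => a (k + 2 + i)%nat
                 * (1 / INR (k + 2 + i) ^ 2 - 1 / (INR (k + 2 + i) - 1) ^ 2))
               = tail_a a (S (S k))).
  { unfold tail_a. apply Series_ext. intros i.
    replace (k + 2 + i)%nat with (S (S k) + i)%nat by lia.
    rewrite inv_sq_diff_ge2, minus_INR by lia. simpl (INR 1). unfold Rdiv. ring. }
  assert (Ec : Series (fun i => 2 * a k * c (k + 1 + i)%nat
                 / (INR (k + 1 + i) * (INR (k + 1 + i) + 1)))
               = 2 * a k * tail_c c (S k)).
  { unfold tail_c. rewrite <- Series_scal_l. apply Series_ext. intros i.
    replace (k + 1 + i)%nat with (S k + i)%nat by lia. unfold inv_pronic, Rdiv. ring. }
  assert (HK : 1 <= INR k) by (apply (le_INR 1); exact Hk).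
  unfold F_term. cbv zeta. rewrite Ea, Ec.
  assert (Ea1 : tail_a a (S k) = a (S k) * inv_sq_diff (S k) + tail_a a (S (S k))).
  { apply (Series_shift_1 (fun j => a j * inv_sq_diff j)). apply tail_a_summable_bounded. lia. }
  rewrite (tail_S k Hk). unfold tail. rewrite Ea1.
  rewrite (inv_sq_diff_S k Hk).
  unfold local_form, inv_sq_diff, inv_pronic, coef_a0c, coef_a1c, coef_a2c.
  field. lra.
Qed.

Lemma sum_F_term_by_parts (N : nat) :
  sum_n (fun n => F_term a c (S n)) N
  = sum_n (local_term a c) N + 2 * prefix_sum a (S N) * tail a c (S (S N)).
Proof.
  induction N as [|N IH].
  - rewrite !sum_O. rewrite (F_term_by_parts 1 0) by lia.
    unfold local_term. simpl. ring.
  - rewrite !sum_Sn, IH. unfold plus; simpl.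
    rewrite (F_term_by_parts (S (S N)) (prefix_sum a (S N))) by lia.
    unfold local_term. cbn [prefix_sum]. ring.
Qed.

Lemma F_partial_sum_lower_bound (N : nat) : (10 <= N)%nat ->
  truncation_error a c N <= sum_n (fun n => F_term a c (S n)) N.
Proof.
  intros HN. unfold truncation_error. rewrite sum_F_term_by_parts.
  pose proof (potential_le_sum_local_term a c N) as Hpot.
  unfold potential in Hpot.
  replace (S (S N) <=? 11)%nat with false in Hpot by (symmetry; apply Nat.leb_gt; lia).
  set (x := INR (S (S N))) in *. set (s := prefix_sum a (S N)) in *.
  set (T := tail a c (S (S N))).
  assert (Hx : 0 < x) by (apply lt_0_INR; lia).
  assert (Hsq : 0 <= 1 / 20 / x * s ^ 2 + 2 * s * T + 20 * x * T ^ 2).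
  { replace (1 / 20 / x * s ^ 2 + 2 * s * T + 20 * x * T ^ 2)
      with (1 / 20 / x * (s + 20 * x * T) ^ 2) by (field; lra).
    apply Rmult_le_pos; [apply Rdiv_le_0_compat; lra | apply pow2_ge_0]. }
  lra.
Qed.

Lemma weighted_tail_sq_vanishes :
  is_lim_seq (fun N => INR (S (S N)) * tail a c (S (S N)) ^ 2) 0.
Proof.
  apply (is_lim_seq_le_le (fun _ => 0) _ (fun N => 8 * M ^ 2 * / INR (1 + N))).
  - intros N. cbn [Nat.add].
    pose proof (tail_bound (S (S N)) ltac:(lia)) as HT.
    replace (S (S N) - 1)%nat with (S N) in HT by lia.
    rewrite (S_INR (S N)).
    set (y := INR (S N)) in *. set (T := tail a c (S (S N))) in *.
    assert (Hy : 1 <= y) by (apply (le_INR 1); lia).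
    assert (HT2 : T ^ 2 <= (2 * M / y) ^ 2).
    { rewrite <- (pow2_abs T). apply pow_incr. split; [apply Rabs_pos | exact HT]. }
    replace ((2 * M / y) ^ 2) with (4 * M ^ 2 * / y * / y) in HT2 by (field; lra).
    assert (Hinv : 0 < / y <= 1).
    { split; [apply Rinv_0_lt_compat; lra |]. rewrite <- Rinv_1. apply Rinv_le_contravar; lra. }
    assert (Hyinv : y * / y = 1) by (field; lra).
    pose proof (pow2_ge_0 T). pose proof (pow2_ge_0 M).
    split; [nra |].
    assert (0 <= M ^ 2 * / y) by nra.
    nra.
  - apply is_lim_seq_const.
  - replace (Finite 0) with (Finite (8 * M ^ 2 * 0)) by (f_equal; ring).
    apply is_lim_seq_mult'; [apply is_lim_seq_const | apply is_lim_seq_inv_INR_add].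
Qed.

Lemma F_term_abs_bound (k : nat) : (1 <= k)%nat ->
  Rabs (F_term a c k)
  <= 6 * a k ^ 2 + 5 * a (S k) ^ 2 + 5 * a (S (S k)) ^ 2 + 5 * c k ^ 2 + 8 * M ^ 2 * inv_pronic k.
Proof.
  intros Hk.
  rewrite (F_term_by_parts k 0 Hk).
  pose proof (local_form_zero_bound k (a k) (a (S k)) (a (S (S k))) (c k) Hk) as Hloc.
  pose proof (tail_bound (S k) ltac:(lia)) as HT.
  replace (S k - 1)%nat with k in HT by lia.
  set (T := tail a c (S k)) in *. set (K := INR k) in *.
  assert (HK : 1 <= K) by (apply (le_INR 1); exact Hk).
  assert (Hpronic : / K ^ 2 <= 2 * inv_pronic k).
  { unfold inv_pronic. fold K.
    assert (0 <= 2 * (1 / (K * (K + 1))) - / K ^ 2); [| lra].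
    replace (2 * (1 / (K * (K + 1))) - / K ^ 2) with ((K - 1) / (K ^ 2 * (K + 1))) by (field; lra).
    apply Rdiv_le_0_compat; nra. }
  assert (HT2 : T ^ 2 <= 8 * M ^ 2 * inv_pronic k).
  { assert (T ^ 2 <= (2 * M / K) ^ 2).
    { rewrite <- (pow2_abs T). apply pow_incr. split; [apply Rabs_pos | exact HT]. }
    replace ((2 * M / K) ^ 2) with (4 * M ^ 2 * / K ^ 2) in * by (field; lra).
    pose proof (pow2_ge_0 M). nra. }
  assert (Hprod : Rabs (2 * a k * T) <= a k ^ 2 + T ^ 2).
  { apply Rabs_le. pose proof (two_mul_le_sq_add (a k) T 1 ltac:(lra)). lra. }
  replace (local_form k 0 (a k) (a (S k)) (a (S (S k))) (c k) + 2 * (0 + a k) * T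
           - 2 * 0 * tail a c k)
    with (local_form k 0 (a k) (a (S k)) (a (S (S k))) (c k) + 2 * a k * T) by ring.
  eapply Rle_trans; [apply Rabs_triang |]. lra.
Qed.

Hypothesis square_summable : ex_series (fun n => a (S n) ^ 2 + c (S n) ^ 2).

Lemma a_sq_vanishes : is_lim_seq (fun n => a (S n) ^ 2) 0.
Proof.
  apply (is_lim_seq_le_le (fun _ => 0) _ (fun n => a (S n) ^ 2 + c (S n) ^ 2)).
  - intros n. pose proof (pow2_ge_0 (a (S n))). pose proof (pow2_ge_0 (c (S n))). lra.
  - apply is_lim_seq_const.
  - exact (ex_series_lim_0 _ square_summable).
Qed.

Lemma F_term_summable : ex_series (fun n => F_term a c (S n)).
Proof.
  set (f := fun n => a (S n) ^ 2 + c (S n) ^ 2).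
  assert (Hf1 : ex_series (fun n => f (S n)))
    by exact (proj1 (ex_series_incr_1 f) square_summable).
  assert (Hf2 : ex_series (fun n => f (S (S n)))) by exact (proj1 (ex_series_incr_1 _) Hf1).
  assert (Hw : ex_series (fun n => inv_pronic (S n)))
    by (exists (/ INR 1); exact (is_series_inv_pronic 1 (le_n 1))).
  apply (@ex_series_le R_AbsRing R_CompleteNormedModule _
           (fun n => 6 * f n + 5 * f (S n) + 5 * f (S (S n)) + 8 * M ^ 2 * inv_pronic (S n))).
  - intros n. eapply Rle_trans; [exact (F_term_abs_bound (S n) ltac:(lia)) |].
    unfold f. pose proof (pow2_ge_0 (c (S n))). pose proof (pow2_ge_0 (c (S (S n)))).
    pose proof (pow2_ge_0 (c (S (S (S n))))). lra.
  - repeat apply (@ex_series_plus R_AbsRing R_NormedModule);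
      apply (@ex_series_scal_l R_AbsRing R_NormedModule); assumption.
Qed.

Lemma truncation_error_vanishes : is_lim_seq (truncation_error a c) 0.
Proof.
  pose proof (proj1 (is_lim_seq_incr_1 _ 0) a_sq_vanishes) as Ha1.
  pose proof (proj1 (is_lim_seq_incr_1 _ 0) Ha1) as Ha2.
  replace (Finite 0) with (Finite (- (62 / 10000) * 0 - 46 / 10000 * 0 - 20 * 0))
    by (f_equal; ring).
  apply is_lim_seq_minus'; [apply is_lim_seq_minus' |];
    apply is_lim_seq_mult'; try apply is_lim_seq_const.
  - exact Ha1.
  - exact Ha2.
  - exact weighted_tail_sq_vanishes.
Qed.

Lemma Series_F_term_nonneg : 0 <= Series (fun n => F_term a c (S n)).
Proof.
  enough (H : Rbar_le 0 (Series (fun n => F_term a c (S n)))) by exact H.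
  apply (is_lim_seq_le_loc (truncation_error a c) (sum_n (fun n => F_term a c (S n)))).
  - exists 10%nat. exact F_partial_sum_lower_bound.
  - exact truncation_error_vanishes.
  - exact (Series_correct _ F_term_summable).
Qed.

End BoundedSequences.

Lemma square_summable_bounded (a c : nat -> R) :
  ex_series (fun n => a (S n) ^ 2 + c (S n) ^ 2) ->
  exists M, forall j, (1 <= j)%nat -> Rabs (a j) <= M /\ Rabs (c j) <= M.
Proof.
  intros Hsum. set (f := fun n => a (S n) ^ 2 + c (S n) ^ 2).
  assert (Hf : forall k, 0 <= f k) by (intros k; unfold f; nra).
  assert (Habs : forall x, Rabs x <= 1 + x ^ 2) by (intros x; apply Rabs_le; split; nra).
  exists (1 + Series f). intros j Hj. destruct j as [|n]; [lia |].
  pose proof (Series_ge_term f n Hf Hsum) as Hn. unfold f in Hn at 1.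
  pose proof (Habs (a (S n))). pose proof (Habs (c (S n))).
  pose proof (pow2_ge_0 (a (S n))). pose proof (pow2_ge_0 (c (S n))).
  split; lra.
Qed.

Theorem mainTheorem15 (a c : nat -> R)
  (Hl2 : ex_series (fun n => a (S n) ^ 2 + c (S n) ^ 2)) :
  ex_series (fun n => F_term a c (S n)) /\
  0 <= Series (fun n => F_term a c (S n)).
Proof.
  destruct (square_summable_bounded a c Hl2) as [M HM].
  assert (Ha : forall j, (1 <= j)%nat -> Rabs (a j) <= M) by (intros j Hj; apply HM, Hj).
  assert (Hc : forall j, (1 <= j)%nat -> Rabs (c j) <= M) by (intros j Hj; apply HM, Hj).
  split.
  - exact (F_term_summable a c M Ha Hc Hl2).
  - exact (Series_F_term_nonneg a c M Ha Hc Hl2).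
Qed.
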